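(* In the standing setup, assume the element $j\in G$ with $\rho(j)=\mathrm{diag}(e^{2\pi iq_1},\dots,e^{2\pi iq_n})$ exists, and fix $\sigma\in\mathrm{Hom}(G,\mathbb{Z}/2\mathbb{Z})$. If $\sigma(h)(\sigma(j)+1)\equiv 0 \pmod 2$ for all $h\in G$ (which holds for instance if $\sigma(j)=1$ or $\sigma\equiv 0$), then for every $h\in G$ and every homogeneous $a\in M_{f_h}$, $$\varphi(h^{-1}j)(a1_h)=e^{2\pi i(\deg a+s_h)}\,a1_h,$$ i.e. $\varphi(h^{-1}j)|_{A_h}=\exp(2\pi i\mathcal{Q})|_{A_h}$ where $\mathcal{Q}(a1_h)=(\deg a+s_h)a1_h$; thus $GM_f$ is $G$-Euler.
   Context: Standing setup. Let $f\in\mathbb{C}[z_1,\dots,z_n]$ be quasi-homogeneous with an isolated singularity at $0$, with weights $q_i\in(0,1)$ (so $f(e^{tq_1}z_1,\dots,e^{tq_n}z_n)=e^tf(z)$); $M_f=\mathbb{C}[z]/(\partial_1f,\dots,\partial_nf)$ graded by $\deg z_i=q_i$. $G$ is a finite abelian group with a diagonal representation $\rho:G\to GL(n,\mathbb{C})$ leaving $f$ invariant; $\rho(g)=\mathrm{diag}(e^{2\pi i\nu_i(g)})$ with $\nu_i(g)\in[0,1)$; $\mathrm{Fix}(g)$ is the span of the $z_i$ with $\nu_i(g)=0$, $f_g=f|_{\mathrm{Fix}(g)}$, $A_g=M_{f_g}$ (equal to $\mathbb{C}$ if $\mathrm{Fix}(g)=0$) with elements $a1_g$, and $GM_f=\bigoplus_gA_g$.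 Shift $s_g=\sum_{i:\nu_i(g)\ne0}(\nu_i(g)-q_i)$. Given $\sigma\in\mathrm{Hom}(G,\mathbb{Z}/2\mathbb{Z})$, the $G$-action on $GM_f$ is $$\varphi(h)(a1_g)=(-1)^{\sigma(h)\sigma(g)}\det(\rho(h))^{-1}\det(\rho(h)|_{\mathrm{Fix}(g)})\,(a\circ\rho(h))\,1_g,$$ where $(a\circ\rho(h))(z)=a(\rho(h)z)$ and the determinant of the restriction to the zero space is $1$. $GM_f$ is called $G$-Euler if there is a central $j$ with $\varphi(h^{-1}j)|_{A_h}=\exp(2\pi i\mathcal{Q})|_{A_h}$ for all $h$. *)

From HB Require Import structures.
From mathcomp Require Import all_boot all_order all_algebra all_fingroup.
From mathcomp Require Import mpoly.
From mathcomp Require Import complex.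
From mathcomp Require Import reals sequences exp trigo.

Set Implicit Arguments.
Unset Strict Implicit.
Unset Printing Implicit Defensive.

Import GRing.Theory Num.Theory.
Local Open Scope ring_scope.
Local Open Scope complex_scope.

Section Defs.
Variable R : realType.
Variable n : nat.
Local Notation C := R[i].

Definition e2pi (x : R) : C := (cos (2 * pi * x)) +i* (sin (2 * pi * x)).

Definition lin_comp (M : 'M[C]_n) (a : {mpoly C[n]}) : {mpoly C[n]} :=
  comp_mpoly [tuple \sum_(k < n) M i k *: 'X_k | i < n] a.

Definition quasi_homogeneous (q : 'I_n -> R) (f : {mpoly C[n]}) : Prop :=
  forall (t : R) (z : 'I_n -> C),
    meval (fun i => (expR (t * q i))%:C * z i) f = (expR t)%:C * meval z f.

Definition isolated_singularity (f : {mpoly C[n]}) : Prop :=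
  exists eps : R, 0 < eps /\
    forall z : 'I_n -> C, (forall i, `|z i| < eps%:C) ->
      (forall i, meval z (mderiv i f) = 0) -> z = (fun _ => 0).

Section WithNu.
Variable gT : finGroupType.
Variable nu : gT -> 'I_n -> R.

(* i indexes a coordinate of Fix(g) *)
Definition in_fix (g : gT) (i : 'I_n) : bool := nu g i == 0.

Definition supported_on_fix (g : gT) (a : {mpoly C[n]}) : Prop :=
  forall m, m \in msupp a -> forall i, ~~ in_fix g i -> m i = 0%N.

Definition restrict_fix (g : gT) (f : {mpoly C[n]}) : {mpoly C[n]} :=
  comp_mpoly [tuple (if in_fix g i then 'X_i else 0) | i < n] f.

(* equality of a 1_g and b 1_g in A_g = M_{f_g}
   = C[z_i : i in Fix g] / (d_i f_g : i in Fix g) *)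
Definition milnor_eq (f : {mpoly C[n]}) (g : gT) (a b : {mpoly C[n]}) : Prop :=
  exists c : 'I_n -> {mpoly C[n]},
    (forall i, supported_on_fix g (c i)) /\
    a - b = \sum_(i < n | in_fix g i) c i * mderiv i (restrict_fix g f).

Definition weighted_homog (q : 'I_n -> R) (d : R) (a : {mpoly C[n]}) : Prop :=
  forall m, m \in msupp a -> \sum_(i < n) q i * (m i)%:R = d.

(* det (M restricted to Fix(g)), computed in the basis (e_i)_{i in Fix g};
   equal to 1 if Fix(g) = 0 *)
Definition det_fix (M : 'M[C]_n) (g : gT) : C :=
  let A := [set i : 'I_n | in_fix g i] in
  \det (mxsub (fun k : 'I_#|A| => enum_val k) (fun k : 'I_#|A| => enum_val k) M).

Definition shift (q : 'I_n -> R) (g : gT) : R :=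
  \sum_(i < n | ~~ in_fix g i) (nu g i - q i).

(* phi(h)(a 1_g), returned as the representative polynomial of the A_g-part;
   sigma : G -> Z/2Z encoded as bool (xor) *)
Definition phi (sigma : gT -> bool) (rho : gT -> 'M[C]_n) (h g : gT)
    (a : {mpoly C[n]}) : {mpoly C[n]} :=
  ((-1) ^+ (sigma h * sigma g)%N * (\det (rho h))^-1 * det_fix (rho h) g)
    *: lin_comp (rho h) a.

Definition G_Euler (q : 'I_n -> R) (G : {group gT}) (sigma : gT -> bool)
    (rho : gT -> 'M[C]_n) (f : {mpoly C[n]}) : Prop :=
  exists j0, j0 \in G /\ (forall g, g \in G -> commute j0 g) /\
    forall h, h \in G -> forall (d : R) (a : {mpoly C[n]}),
      supported_on_fix h a -> weighted_homog q d a ->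
      milnor_eq f h (phi sigma rho (h^-1 * j0) h a) (e2pi (d + shift q h) *: a).

End WithNu.
End Defs.

From HB Require Import structures.
From mathcomp Require Import all_boot all_order all_algebra all_fingroup.
From mathcomp Require Import mpoly.
From mathcomp Require Import complex.
From mathcomp Require Import reals sequences exp trigo.
From mathcomp Require Import ring.

Set Implicit Arguments.
Unset Strict Implicit.
Unset Printing Implicit Defensive.

Import GRing.Theory Num.Theory.
Local Open Scope ring_scope.
Local Open Scope complex_scope.

(* Everything is diagonal: rho(h^-1 j) = diag(e(q_i - nu_i(h))), which acts on a
   monomial z^m by e(sum_i (q_i - nu_i(h)) m_i).  For a homogeneous a supported on
   Fix(h) the weights nu_i(h) vanish on the support, so a is an eigenvector with
   eigenvalue e(deg a).  The determinant factor det(rho)^-1 det(rho|Fix) only keeps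
   the coordinates outside Fix(h) and equals e(s_h), and the hypothesis on sigma
   kills the sign.  The relation in A_h then holds already in the polynomial ring. *)

Section E2pi.
Variable R : realType.

Lemma e2piD (x y : R) : e2pi (x + y) = e2pi x * e2pi y.
Proof. by rewrite /e2pi mulrDr cosD sinD /=; congr (_ +i* _); ring. Qed.

Lemma e2pi0 : e2pi (0 : R) = 1.
Proof. by rewrite /e2pi mulr0 cos0 sin0. Qed.

Lemma e2pi_sum (I : Type) (r : seq I) (P : pred I) (F : I -> R) :
  e2pi (\sum_(i <- r | P i) F i) = \prod_(i <- r | P i) e2pi (F i).
Proof. exact: (big_morph _ e2piD e2pi0). Qed.

Lemma e2piMn (x : R) k : e2pi x ^+ k = e2pi (x *+ k).
Proof.
elim: k => [|k IHk]; first by rewrite expr0 mulr0n e2pi0.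
by rewrite exprS IHk mulrS e2piD.
Qed.

Lemma e2piN (x : R) : e2pi (- x) = (e2pi x)^-1.
Proof.
have e2piDN : e2pi x * e2pi (- x) = 1 by rewrite -e2piD subrr e2pi0.
have nz : e2pi x != 0.
  by apply: contra_eq_neq e2piDN => ->; rewrite mul0r eq_sym oner_neq0.
by apply: (mulfI nz); rewrite divff.
Qed.

End E2pi.

Section DiagonalAction.
Variables (R : realType) (n : nat).

Lemma lin_comp_diag (D : 'I_n -> R[i]) (a : {mpoly R[i][n]}) :
  lin_comp (diag_mx (\row_i D i)) a =
  \sum_(m <- msupp a) ((a@_m * \prod_(i < n) D i ^+ m i) *: 'X_[m]).
Proof.
rewrite /lin_comp comp_mpolyEX; apply: eq_bigr => m _.
rewrite comp_mpolyX -scalerA; congr (_ *: _).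
rewrite (eq_bigr (fun i => D i ^+ m i *: 'X_i ^+ m i)); last first.
  move=> i _; rewrite tnth_mktuple (bigD1 i) //= big1 ?addr0.
    by rewrite !mxE eqxx mulr1n exprZn.
  by move=> k /negbTE ki; rewrite !mxE eq_sym ki mulr0n scale0r.
by rewrite scaler_prod -mpolyXE_id.
Qed.

Lemma lin_comp_diag_e2pi_homog (w : 'I_n -> R) (d : R) (a : {mpoly R[i][n]}) :
  weighted_homog w d a -> lin_comp (diag_mx (\row_i e2pi (w i))) a = e2pi d *: a.
Proof.
move=> homa; rewrite lin_comp_diag [in RHS](mpolyE a) scaler_sumr.
apply: eq_big_seq => m /homa <-; rewrite scalerA mulrC e2pi_sum; congr (_ * _ *: _).
by apply: eq_bigr => i _; rewrite e2piMn mulr_natr.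
Qed.

Variables (gT : finGroupType) (nu : gT -> 'I_n -> R).

Lemma det_fix_diag (D : 'I_n -> R[i]) (g : gT) :
  det_fix nu (diag_mx (\row_i D i)) g = \prod_(i < n | in_fix nu g i) D i.
Proof.
rewrite /det_fix; set A := [set i : 'I_n | in_fix nu g i].
have -> : mxsub enum_val enum_val (diag_mx (\row_i D i)) =
          diag_mx (\row_(k < #|A|) D (enum_val k)).
  by apply/matrixP => k l; rewrite !mxE (inj_eq enum_val_inj).
rewrite det_diag (eq_bigr (fun k => D (enum_val k))) => [|k _]; last by rewrite mxE.
by rewrite -(big_enum_val (fun x : 'I_n => D x)); apply: eq_bigl => i; rewrite inE.
Qed.

Lemma weighted_homog_fix (q : 'I_n -> R) (h : gT) (d : R) (a : {mpoly R[i][n]}) :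
  supported_on_fix nu h a -> weighted_homog q d a ->
  weighted_homog (fun i => q i - nu h i) d a.
Proof.
move=> suppa homa m ma; rewrite -(homa m ma); apply: eq_bigr => i _.
have [/eqP -> | notfix] := boolP (in_fix nu h i); first by rewrite subr0.
by rewrite (suppa m ma i notfix) !mulr0.
Qed.

Lemma det_ratio_e2pi (q : 'I_n -> R) (h : gT) :
  (\det (diag_mx (\row_i e2pi (q i - nu h i))))^-1 *
    det_fix nu (diag_mx (\row_i e2pi (q i - nu h i))) h = e2pi (shift nu q h).
Proof.
rewrite det_diag det_fix_diag; under eq_bigr do rewrite mxE.
rewrite -!e2pi_sum -e2piN -e2piD (bigID (in_fix nu h)) /= /shift.
rewrite opprD addrAC addNr add0r -sumrN.
by under eq_bigr do rewrite opprB.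
Qed.

End DiagonalAction.

Lemma xor_hom_pair (gT : finGroupType) (G : {group gT}) (sigma : gT -> bool) (h j : gT) :
  (forall g g', g \in G -> g' \in G -> sigma (g * g')%g = sigma g (+) sigma g') ->
  h \in G -> j \in G -> ((sigma h * (sigma j + 1)) %% 2 = 0)%N ->
  (sigma (h^-1 * j)%g * sigma h)%N = 0%N.
Proof.
move=> sigmaM hG jG sigma_hj.
have sigma1 : sigma 1%g = false.
  by have := sigmaM _ _ (group1 G) (group1 G); rewrite mulg1; case: (sigma 1%g).
have sigmaV : sigma h^-1%g = sigma h.
  have := sigmaM _ _ (groupVr hG) hG; rewrite mulVg sigma1.
  by case: (sigma h^-1%g); case: (sigma h).
by rewrite sigmaM ?groupV // sigmaV; move: sigma_hj; case: (sigma h); case: (sigma j).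
Qed.

Lemma milnor_eq_refl (R : realType) (n : nat) (gT : finGroupType)
    (nu : gT -> 'I_n -> R) (f : {mpoly R[i][n]}) (g : gT) (a : {mpoly R[i][n]}) :
  milnor_eq nu f g a a.
Proof.
exists (fun _ => 0); split; first by move=> i m; rewrite msupp0.
by rewrite subrr big1 // => i _; rewrite mul0r.
Qed.

Section EulerEigenvalue.
Variables (R : realType) (n : nat) (q : 'I_n -> R) (gT : finGroupType).
Variables (G : {group gT}) (rho : gT -> 'M[R[i]]_n) (nu : gT -> 'I_n -> R).
Variables (sigma : gT -> bool) (j : gT).
Hypothesis rho1 : rho 1%g = 1%:M.
Hypothesis rhoM : forall g h, g \in G -> h \in G -> rho (g * h)%g = rho g *m rho h.
Hypothesis rho_diag : forall g, g \in G -> rho g = diag_mx (\row_i e2pi (nu g i)).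
Hypothesis jG : j \in G.
Hypothesis rho_j : rho j = diag_mx (\row_i e2pi (q i)).

Lemma rho_invM_j (h : gT) : h \in G ->
  rho (h^-1 * j)%g = diag_mx (\row_i e2pi (q i - nu h i)).
Proof.
move=> hG; have hVG := groupVr hG.
have nuV i : e2pi (nu h^-1%g i) = e2pi (- nu h i).
  have := rhoM hVG hG; rewrite mulVg rho1 !rho_diag // mulmx_diag.
  move=> /matrixP /(_ i i); rewrite !mxE eqxx !mulr1n => /esym.
  by rewrite mulrC e2piN => /mulr1_eq.
rewrite rhoM // rho_diag // rho_j mulmx_diag; congr diag_mx; apply/rowP => i.
by rewrite !mxE nuV -e2piD addrC.
Qed.

Hypothesis sigmaM :
  forall g h, g \in G -> h \in G -> sigma (g * h)%g = sigma g (+) sigma h.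
Hypothesis sigma_j : forall h, h \in G -> ((sigma h * (sigma j + 1)) %% 2 = 0)%N.

Lemma phi_invM_j_homog (h : gT) (d : R) (a : {mpoly R[i][n]}) : h \in G ->
  supported_on_fix nu h a -> weighted_homog q d a ->
  phi nu sigma rho (h^-1 * j)%g h a = e2pi (d + shift nu q h) *: a.
Proof.
move=> hG suppa homa.
rewrite /phi (xor_hom_pair sigmaM hG jG (sigma_j hG)) expr0 mul1r rho_invM_j //.
rewrite det_ratio_e2pi (lin_comp_diag_e2pi_homog (weighted_homog_fix suppa homa)).
by rewrite scalerA -e2piD addrC.
Qed.

End EulerEigenvalue.

Theorem mainTheorem2 (R : realType) (n : nat) (q : 'I_n -> R)
  (f : {mpoly R[i][n]})
  (gT : finGroupType) (G : {group gT})
  (rho : gT -> 'M[R[i]]_n) (nu : gT -> 'I_n -> R)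
  (sigma : gT -> bool) (j : gT) :
  (forall i, 0 < q i < 1) ->
  quasi_homogeneous q f ->
  isolated_singularity f ->
  abelian G ->
  rho 1%g = 1%:M ->
  (forall g h, g \in G -> h \in G -> rho (g * h)%g = rho g *m rho h) ->
  (forall g i, g \in G -> 0 <= nu g i < 1) ->
  (forall g, g \in G -> rho g = diag_mx (\row_i e2pi (nu g i))) ->
  (forall g, g \in G -> lin_comp (rho g) f = f) ->
  j \in G ->
  rho j = diag_mx (\row_i e2pi (q i)) ->
  (forall g h, g \in G -> h \in G -> sigma (g * h)%g = sigma g (+) sigma h) ->
  (forall h, h \in G -> ((sigma h * (sigma j + 1)) %% 2 = 0)%N) ->
  (forall h, h \in G -> forall (d : R) (a : {mpoly R[i][n]}),
      supported_on_fix nu h a -> weighted_homog q d a ->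
      milnor_eq nu f h (phi nu sigma rho (h^-1 * j)%g h a)
                (e2pi (d + shift nu q h) *: a))
  /\ G_Euler nu q G sigma rho f.
Proof.
move=> _ _ _ abG rho1 rhoM _ rho_diag _ jG rho_j sigmaM sigma_j.
have eigen h : h \in G -> forall (d : R) (a : {mpoly R[i][n]}),
    supported_on_fix nu h a -> weighted_homog q d a ->
    milnor_eq nu f h (phi nu sigma rho (h^-1 * j)%g h a)
              (e2pi (d + shift nu q h) *: a).
  move=> hG d a suppa homa.
  rewrite (phi_invM_j_homog rho1 rhoM rho_diag jG rho_j sigmaM sigma_j hG suppa homa).
  exact: milnor_eq_refl.
split=> //; exists j; do !split=> //.
by move=> g gG; exact: (centsP abG).
Qed.
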